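(* For all $k_1,k_2\in\mathbb{R}$ with $r:=\sqrt{k_1^2+k_2^2}\le1$, $$-\arccos(k_1)-\arccos(k_2)+\arccos(r)+\frac\pi2\le k_1+k_2-r.$$ *)

From Stdlib Require Import Reals.

From Stdlib Require Import Reals Lra Psatz.
Open Scope R_scope.

(* Since acos k = PI/2 - asin k on [-1, 1], the inequality is equivalent to
     g k1 + g k2 <= g r,    where g t := asin t - t  and  r = sqrt (k1^2 + k2^2).
   The function g is odd and nonnegative on [0, 1] (because sin t <= t), so
   g k <= g |k|, and it suffices to treat k1, k2 >= 0.  For fixed y >= 0 the
   function  D t := g (sqrt (t^2 + y^2)) - g t  has D 0 = g y and is
   nondecreasing on [0, x]: writing R = sqrt (t^2 + y^2), its derivative is
   g'(R) t/R - g'(t), and g'(s)/s = s / (sqrt (1 - s^2) (1 + sqrt (1 - s^2)))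
   is increasing in s, while t <= R.  The mean value theorem then gives
   g x + g y <= g r when x^2 + y^2 < 1; on the unit circle we use instead
   asin x + asin y = PI/2.  The file proves: elementary facts on asin, the
   derivative computations, the monotonicity of g'(s)/s, the superadditivity
   of g along sqrt (x^2 + y^2) for x, y >= 0, and finally the theorem. *)

Definition asin_excess (t : R) : R := asin t - t.

Lemma asin_nonneg x : 0 <= x <= 1 -> 0 <= asin x.
Proof.
  intros Hx.
  destruct (Rlt_or_le (asin x) 0) as [Hneg | Hnonneg]; [exfalso | exact Hnonneg].
  pose proof (asin_bound x). pose proof PI_RGT_0.
  assert (Hsin : 0 < sin (- asin x)) by (apply sin_gt_0; lra).
  rewrite sin_neg, sin_asin in Hsin by lra.
  lra.
Qed.

(* On [0, 1] the excess is nonnegative, i.e. x <= asin x, since sin t <= t for t >= 0. *)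
Lemma asin_excess_nonneg x : 0 <= x <= 1 -> 0 <= asin_excess x.
Proof.
  intros Hx. unfold asin_excess.
  pose proof (asin_nonneg x Hx) as Hpos.
  pose proof (sin_asin x ltac:(lra)) as Hsin.
  destruct (Req_dec (asin x) 0) as [Hzero | Hnz].
  - rewrite Hzero, sin_0 in Hsin. lra.
  - pose proof (sin_lt_x (asin x) ltac:(lra)). lra.
Qed.

(* Since the excess is odd and nonnegative on [0, 1], it is largest at |k|. *)
Lemma asin_excess_le_abs k : -1 <= k <= 1 -> asin_excess k <= asin_excess (Rabs k).
Proof.
  intros Hk. destruct (Rle_or_lt 0 k) as [Hk0 | Hk0].
  - rewrite Rabs_right by lra. lra.
  - rewrite Rabs_left by lra.
    pose proof (asin_excess_nonneg (- k) ltac:(lra)) as Hnn.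
    unfold asin_excess in *. rewrite asin_opp in *. lra.
Qed.

Lemma asin_complementary x y :
  0 <= x -> 0 <= y -> x ^ 2 + y ^ 2 = 1 -> asin x + asin y = PI / 2.
Proof.
  intros Hx Hy Hcircle.
  assert (Hy_cos : y = cos (asin x)).
  { rewrite cos_asin by nra. rewrite <- (sqrt_pow2 y) by lra.
    f_equal. unfold Rsqr. lra. }
  pose proof (asin_nonneg x ltac:(nra)). pose proof (asin_bound x).
  rewrite Hy_cos, <- sin_shift, asin_sin; lra.
Qed.

Lemma asin_excess_derivative s :
  -1 < s < 1 -> derivable_pt_lim asin_excess s (1 / sqrt (1 - s²) - 1).
Proof.
  intros Hs.
  apply (derivable_pt_lim_minus asin id); [| apply derivable_pt_lim_id].
  apply (derive_pt_eq_1 _ _ _ (derivable_pt_asin s Hs)).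
  apply derive_pt_asin.
Qed.

Lemma hypot_derivative y t :
  0 < t ^ 2 + y ^ 2 ->
  derivable_pt_lim (fun t => sqrt (t ^ 2 + y ^ 2)) t (t / sqrt (t ^ 2 + y ^ 2)).
Proof.
  intros Hpos.
  assert (Hsquare : derivable_pt_lim (fun t => t ^ 2 + y ^ 2) t (2 * t)).
  { replace (2 * t) with (INR 2 * t ^ Init.Nat.pred 2 + 0) by (simpl; ring).
    apply (derivable_pt_lim_plus (fun t => t ^ 2) (fct_cte (y ^ 2))).
    - apply derivable_pt_lim_pow.
    - apply derivable_pt_lim_const. }
  pose proof (derivable_pt_lim_comp _ sqrt t _ _ Hsquare
                (derivable_pt_lim_sqrt _ Hpos)) as Hcomp.
  assert (0 < sqrt (t ^ 2 + y ^ 2)) by (apply sqrt_lt_R0; lra).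
  replace (t / sqrt (t ^ 2 + y ^ 2))
    with (/ (2 * sqrt (t ^ 2 + y ^ 2)) * (2 * t)) by (field; lra).
  exact Hcomp.
Qed.

Lemma asin_excess_slope_eq s :
  0 < s < 1 -> 1 / sqrt (1 - s²) - 1 = s * (s / (sqrt (1 - s²) * (1 + sqrt (1 - s²)))).
Proof.
  intros Hs.
  assert (Hp_sq : sqrt (1 - s²) ^ 2 = 1 - s²) by (apply pow2_sqrt; unfold Rsqr; nra).
  assert (Hp_pos : 0 < sqrt (1 - s²)) by (apply sqrt_lt_R0; unfold Rsqr; nra).
  set (p := sqrt (1 - s²)) in *. unfold Rsqr in Hp_sq.
  replace (s * (s / (p * (1 + p)))) with ((1 - p ^ 2) / (p * (1 + p)))
    by (rewrite Hp_sq; field; lra).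
  field. lra.
Qed.

(* s / (sqrt (1 - s^2) (1 + sqrt (1 - s^2))) is nondecreasing on (0, 1):
   the numerator grows while the positive denominator shrinks. *)
Lemma asin_excess_slope_mono c r :
  0 < c <= r -> r < 1 ->
  c / (sqrt (1 - c²) * (1 + sqrt (1 - c²))) <= r / (sqrt (1 - r²) * (1 + sqrt (1 - r²))).
Proof.
  intros Hc Hr.
  assert (Hp_pos : 0 < sqrt (1 - r²)) by (apply sqrt_lt_R0; unfold Rsqr; nra).
  assert (Hpq : sqrt (1 - r²) <= sqrt (1 - c²)) by (apply sqrt_le_1_alt; unfold Rsqr; nra).
  unfold Rdiv. apply Rmult_le_compat; [lra | | lra |].
  - apply Rlt_le, Rinv_0_lt_compat. nra.
  - apply Rinv_le_contravar; nra.
Qed.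

Lemma asin_excess_derivative_compare c r :
  0 < c <= r -> r < 1 ->
  1 / sqrt (1 - c²) - 1 <= (1 / sqrt (1 - r²) - 1) * (c / r).
Proof.
  intros Hc Hr.
  rewrite (asin_excess_slope_eq c), (asin_excess_slope_eq r) by lra.
  pose proof (asin_excess_slope_mono c r Hc Hr) as Hmono.
  set (slope_r := r / (sqrt (1 - r²) * (1 + sqrt (1 - r²)))) in *.
  replace (r * slope_r * (c / r)) with (c * slope_r) by (field; lra).
  apply Rmult_le_compat_l; lra.
Qed.

(* Superadditivity strictly inside the unit disc, by the mean value theorem
   applied to D t = g (sqrt (t^2 + y^2)) - g t on [0, x]. *)
Lemma asin_excess_superadditive_interior x y :
  0 < x -> 0 < y -> x ^ 2 + y ^ 2 < 1 ->
  asin_excess x + asin_excess y <= asin_excess (sqrt (x ^ 2 + y ^ 2)).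
Proof.
  intros Hx Hy Hxy.
  set (D := fun t => asin_excess (sqrt (t ^ 2 + y ^ 2)) - asin_excess t).
  set (D' := fun t => (1 / sqrt (1 - (sqrt (t ^ 2 + y ^ 2))²) - 1) * (t / sqrt (t ^ 2 + y ^ 2))
                      - (1 / sqrt (1 - t²) - 1)).
  assert (Hhypot : forall t, 0 <= t <= x ->
            0 < sqrt (t ^ 2 + y ^ 2) < 1 /\ t <= sqrt (t ^ 2 + y ^ 2)).
  { intros t Ht. repeat split.
    - apply sqrt_lt_R0. nra.
    - rewrite <- sqrt_1. apply sqrt_lt_1; nra.
    - rewrite <- (sqrt_pow2 t) at 1 by lra. apply sqrt_le_1_alt. nra. }
  assert (HD : forall t, 0 <= t <= x -> derivable_pt_lim D t (D' t)).
  { intros t Ht. destruct (Hhypot t Ht) as [Hr _].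
    apply derivable_pt_lim_minus.
    - apply (derivable_pt_lim_comp (fun t => sqrt (t ^ 2 + y ^ 2)) asin_excess).
      + apply hypot_derivative. nra.
      + apply asin_excess_derivative. lra.
    - apply asin_excess_derivative. nra. }
  destruct (MVT_cor2 D D' 0 x Hx HD) as [c [Hmvt Hc]].
  assert (HD'_nonneg : 0 <= D' c).
  { destruct (Hhypot c ltac:(lra)) as [Hr Hcr]. unfold D'.
    pose proof (asin_excess_derivative_compare c _ (conj (proj1 Hc) Hcr) (proj2 Hr)).
    lra. }
  assert (HD0 : D 0 = asin_excess y).
  { unfold D, asin_excess. replace (0 ^ 2 + y ^ 2) with (y ^ 2) by ring.
    rewrite sqrt_pow2, asin_0 by lra. ring. }
  assert (D 0 <= D x) by nra.
  unfold D in *. lra.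
Qed.

(* Superadditivity on the closed quarter disc: the axes are trivial and the
   arc x^2 + y^2 = 1 follows from asin x + asin y = PI/2. *)
Lemma asin_excess_superadditive x y :
  0 <= x -> 0 <= y -> x ^ 2 + y ^ 2 <= 1 ->
  asin_excess x + asin_excess y <= asin_excess (sqrt (x ^ 2 + y ^ 2)).
Proof.
  intros Hx Hy Hxy. unfold asin_excess.
  destruct (Req_dec x 0) as [-> | Hx0].
  { replace (0 ^ 2 + y ^ 2) with (y ^ 2) by ring. rewrite sqrt_pow2, asin_0 by lra. lra. }
  destruct (Req_dec y 0) as [-> | Hy0].
  { replace (x ^ 2 + 0 ^ 2) with (x ^ 2) by ring. rewrite sqrt_pow2, asin_0 by lra. lra. }
  destruct (Req_dec (x ^ 2 + y ^ 2) 1) as [Hcircle | Hinside].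
  - rewrite Hcircle, sqrt_1, asin_1, <- (asin_complementary x y Hx Hy Hcircle). nra.
  - apply asin_excess_superadditive_interior; lra.
Qed.

Theorem lemmaC6 (k1 k2 : R) :
  sqrt (k1 ^ 2 + k2 ^ 2) <= 1 ->
  - acos k1 - acos k2 + acos (sqrt (k1 ^ 2 + k2 ^ 2)) + PI / 2
    <= k1 + k2 - sqrt (k1 ^ 2 + k2 ^ 2).
Proof.
  intros Hr.
  assert (Hr_sq : sqrt (k1 ^ 2 + k2 ^ 2) ^ 2 = k1 ^ 2 + k2 ^ 2) by (apply pow2_sqrt; nra).
  pose proof (sqrt_pos (k1 ^ 2 + k2 ^ 2)).
  assert (Hk1 : -1 <= k1 <= 1) by nra.
  assert (Hk2 : -1 <= k2 <= 1) by nra.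
  rewrite !acos_asin by lra.
  pose proof (asin_excess_le_abs k1 Hk1).
  pose proof (asin_excess_le_abs k2 Hk2).
  pose proof (asin_excess_superadditive (Rabs k1) (Rabs k2) (Rabs_pos _) (Rabs_pos _)
                ltac:(rewrite !pow2_abs; nra)) as Hsuper.
  rewrite !pow2_abs in Hsuper.
  unfold asin_excess in *. lra.
Qed.
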